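(* Let $N\ge 1$ and let $\mathcal{N}=(p_1,\ldots,p_N)$ with $p_i>0$ and $\sum_{i=1}^N p_i=1$ be fixed. For each positive integer $M$, let $X_1,\ldots,X_M$ be independent random variables with values in $\bar N=\{1,\ldots,N\}$ and $\Pr(X_j=i)=p_i$, and let $\Pr(K\mid M,\mathcal{N})$ be the probability that exactly $K$ distinct values occur among $X_1,\ldots,X_M$. For $s\subseteq\bar N$ write $\Pr(s)=\sum_{i\in s}p_i$. For $i=1,\ldots,N$ let $s_i=\bar N\setminus\{i\}$ and $q_{M,i}=1-\Pr(s_i)^M$, and define the Poisson binomial distribution \[ Q(K\mid M,\mathcal{N})=\sum_{\{s\subseteq\bar N:\ |s|=K\}}\prod_{i\in s}q_{M,i}\prod_{j\in\bar N\setminus s}(1-q_{M,j}). \] Then \[ \lim_{M\to\infty}\ \max_{K=1,\ldots,N}\bigl|\Pr(K\mid M,\mathcal{N})-Q(K\mid M,\mathcal{N})\bigr|=0. \]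
   Context: $Q(\cdot\mid M,\mathcal{N})$ is the distribution of the number of successes among $N$ independent Bernoulli trials with success probabilities $q_{M,1},\ldots,q_{M,N}$. *)

From HB Require Import structures.
From mathcomp Require Import all_boot all_order all_algebra.
From mathcomp Require Import all_classical all_reals topology normedtype sequences.
Set Implicit Arguments. Unset Strict Implicit. Unset Printing Implicit Defensive.
Import Order.TTheory GRing.Theory Num.Theory.
Local Open Scope ring_scope.

(* The value set {1,...,N} is modelled by 'I_N (value i+1 <-> ordinal i).
   p : 'I_N -> R is the distribution N = (p_1,...,p_N). *)

Definition PrS (R : realType) (N : nat) (p : 'I_N -> R) (s : {set 'I_N}) : R :=
  \sum_(i in s) p i.

(* Pr(K | M, N): X_1..X_M i.i.d. with law p; the joint law of (X_1,...,X_M)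
   is the product measure on {ffun 'I_M -> 'I_N}, the outcome x having
   probability prod_j p (x j). *)
Definition PrK (R : realType) (N : nat) (p : 'I_N -> R) (M K : nat) : R :=
  \sum_(x : {ffun 'I_M -> 'I_N} | #|[set x j | j : 'I_M]| == K)
     \prod_(j : 'I_M) p (x j).

Definition qMi (R : realType) (N : nat) (p : 'I_N -> R) (M : nat) (i : 'I_N) : R :=
  1 - (PrS p [set~ i]) ^+ M.

Definition QK (R : realType) (N : nat) (p : 'I_N -> R) (M K : nat) : R :=
  \sum_(s : {set 'I_N} | #|s| == K)
     (\prod_(i in s) qMi p M i) * (\prod_(j in ~: s) (1 - qMi p M j)).

Definition maxdiff (R : realType) (N : nat) (p : 'I_N -> R) (M : nat) : R :=
  \big[Num.max/0]_(1 <= K < N.+1) `|PrK p M K - QK p M K|.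

From HB Require Import structures.
From mathcomp Require Import all_boot all_order all_algebra.
From mathcomp Require Import all_classical all_reals topology normedtype sequences.
From mathcomp Require Import lra.
Import Order.TTheory GRing.Theory Num.Theory.
Local Open Scope classical_set_scope.
Local Open Scope ring_scope.
Set Implicit Arguments. Unset Strict Implicit. Unset Printing Implicit Defensive.

(* Both [Pr(. | M, N)] and [Q(. | M, N)] are probability distributions of a
   count [K] that concentrate on [K = N] at the same rate: the mass off
   [K = N] is at most the expected number [E_M = sum_i (1 - p_i)^M] of values
   that do not occur among [X_1, ..., X_M].  For [Pr] this is the union bound
   over the missing value; for [Q] it is the Weierstrass product inequality
   [prod_i (1 - r_i) >= 1 - sum_i r_i] applied to [Q(N) = prod_i q_{M,i}],
   since [1 - q_{M,i} = (1 - p_i)^M].  Hence [|Pr(K) - Q(K)| <= E_M] for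
   every [K], and [E_M -> 0] because every [p_i > 0]. *)

Section ProbabilityWeights.
Variables (R : realType) (T : finType) (w : T -> R).
Hypotheses (w_ge0 : forall x, 0 <= w x) (w_sum1 : \sum_x w x = 1).

Lemma sum_disjoint_le_1subr (P Q : pred T) :
  (forall x, P x -> ~~ Q x) -> \sum_(x | P x) w x <= 1 - \sum_(x | Q x) w x.
Proof.
move=> PQ; rewrite -w_sum1 [X in X - _](bigID Q) /= addrAC subrr add0r.
rewrite [leRHS]big_mkcond [leLHS]big_mkcond /=; apply: ler_sum => x _.
by case: ifP => [/PQ -> | _] //; case: ifP.
Qed.

Lemma sum_pred_le1 (P : pred T) : \sum_(x | P x) w x <= 1.
Proof.
have := @sum_disjoint_le_1subr P pred0 (fun _ _ => isT).
by rewrite big_pred0_eq subr0.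
Qed.

End ProbabilityWeights.

Lemma sum_ffun_prod (R : comNzRingType) (T : finType) (f : T -> R) (M : nat) :
  \sum_(x : {ffun 'I_M -> T}) \prod_(j : 'I_M) f (x j) = (\sum_k f k) ^+ M.
Proof.
by rewrite -(bigA_distr_bigA (fun (j : 'I_M) k => f k)) prodr_const card_ord.
Qed.

Lemma sum_poisson_binomial (R : comNzRingType) (I : finType) (q : I -> R) :
  \sum_(s : {set I}) (\prod_(i in s) q i) * (\prod_(i in ~: s) (1 - q i)) = 1.
Proof.
transitivity (\prod_i (q i + (1 - q i))); last first.
  by rewrite big1 // => i _; rewrite addrC subrK.
rewrite bigA_distr; apply: eq_bigr => s _.
rewrite [RHS](bigID (mem s)) /=; congr (_ * _); apply: eq_big => i.
- by case: (i \in s).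
- by move=> ->.
- by rewrite finset.in_setC.
- by rewrite finset.in_setC => /negbTE ->.
Qed.

Lemma Weierstrass_product_inequality (R : realDomainType) (I : finType)
  (r : I -> R) :
  (forall i, 0 <= r i <= 1) -> 1 - \sum_i r i <= \prod_i (1 - r i).
Proof.
move=> r01.
suff [] : 1 - \sum_i r i <= \prod_i (1 - r i) /\ 0 <= \prod_i (1 - r i) <= 1
  by [].
apply: (big_rec2 (fun y x => 1 - y <= x /\ 0 <= x <= 1)).
  by rewrite subr0 ler01 lexx.
move=> i y x _ [hyx /andP[x0 x1]]; have /andP[ri0 ri1] := r01 i.
split; first nra.
by apply/andP; split; nra.
Qed.

Lemma cards_eqT (T : finType) (s : {set T}) :
  (#|s| == #|T|) = (s == [set: T]%SET).
Proof. by rewrite eqEcard finset.subsetT cardsT eqn_leq fintype.max_card. Qed.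

Lemma cards_neqT_notin (T : finType) (s : {set T}) :
  #|s| != #|T| -> exists x, x \notin s.
Proof.
rewrite cards_eqT => /eqP sT.
apply/existsP; apply: contra_notT sT => /existsPn sx.
by apply/setP=> x; rewrite inE; exact/negbNE.
Qed.

Section MissingValues.
Variables (R : realType) (N : nat) (p : 'I_N -> R).
Hypotheses (p_gt0 : forall i, 0 < p i) (p_sum1 : \sum_(i < N) p i = 1).

Let p_ge0 i : 0 <= p i. Proof. exact: ltW. Qed.

Lemma PrS_setC1 i : PrS p [set~ i] = 1 - p i.
Proof.
rewrite -p_sum1 (bigD1 i) //= addrC addrK /PrS.
by apply: eq_bigl => j; rewrite in_setC1.
Qed.

Lemma PrS_ge0 s : 0 <= PrS p s.
Proof. exact: sumr_ge0. Qed.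

Lemma PrS_setC1X_itv i M : 0 <= PrS p [set~ i] ^+ M <= 1.
Proof.
rewrite exprn_ge0 ?PrS_ge0 // exprn_ile1 ?PrS_ge0 // PrS_setC1.
by rewrite gerBl.
Qed.

Definition expected_missing (M : nat) : R := \sum_i PrS p [set~ i] ^+ M.

Lemma expected_missing_ge0 M : 0 <= expected_missing M.
Proof. by apply: sumr_ge0 => i _; case/andP: (PrS_setC1X_itv i M). Qed.

Lemma expected_missing_cvg0 : expected_missing @ \oo --> (0 : R^o).
Proof.
have cvgX i : (fun M => PrS p [set~ i] ^+ M) @ \oo --> (0 : R^o).
  apply: cvg_expr; rewrite ger0_norm ?PrS_ge0 // PrS_setC1.
  by rewrite gtrBl p_gt0.
have := cvg_big (@add_continuous R^o) _ (fun i (_ : predT i) => cvgX i).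
by move=> /(_ 0 (index_enum _) _); rewrite big1.
Qed.

Lemma sum_prod_law_avoid (M : nat) i :
  \sum_(x : {ffun 'I_M -> 'I_N}) \prod_j (p (x j) * (x j != i)%:R) =
  PrS p [set~ i] ^+ M.
Proof.
rewrite (sum_ffun_prod (fun k => p k * (k != i)%:R)) /PrS [in RHS]big_mkcond.
congr (_ ^+ _).
by apply: eq_bigr => k _; rewrite in_setC1; case: (k != i); rewrite ?mulr1 ?mulr0.
Qed.

Lemma sum_prod_law (M : nat) :
  \sum_(x : {ffun 'I_M -> 'I_N}) \prod_(j : 'I_M) p (x j) = 1.
Proof. by rewrite sum_ffun_prod p_sum1 expr1n. Qed.

Lemma PrK_ge0 M K : 0 <= PrK p M K.
Proof. by apply: sumr_ge0 => x _; exact: prodr_ge0. Qed.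

Lemma PrK_le_1subr M K : K != N -> PrK p M K <= 1 - PrK p M N.
Proof.
move=> KN; apply: sum_disjoint_le_1subr => [x | | x /eqP ->] //.
- exact: prodr_ge0.
- exact: sum_prod_law.
Qed.

Lemma sum_notsurj_le M :
  \sum_(x : {ffun 'I_M -> 'I_N} | #|[set x j | j : 'I_M]| != N)
     \prod_j p (x j) <= expected_missing M.
Proof.
pose avoid i (x : {ffun 'I_M -> 'I_N}) := \prod_j (p (x j) * (x j != i)%:R).
have avoid_ge0 i x : 0 <= avoid i x.
  by apply: prodr_ge0 => j _; rewrite mulr_ge0.
apply: (@le_trans _ _ (\sum_x \sum_(i < N) avoid i x)).
  rewrite [leLHS]big_mkcond /=; apply: ler_sum => x _.
  case: ifPn => notsurj; last exact: sumr_ge0.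
  have [i iNx] : exists i, i \notin [set x j | j : 'I_M].
    by apply: cards_neqT_notin; rewrite card_ord.
  rewrite (bigD1 i) //= -[leLHS]addr0; apply: lerD; last exact: sumr_ge0.
  suff -> : \prod_j p (x j) = avoid i x by [].
  apply: eq_bigr => j _; suff -> : x j != i by rewrite mulr1.
  by apply: contraNneq iNx => <-; exact: imset_f.
rewrite exchange_big (eq_bigr _ (fun i _ => sum_prod_law_avoid M i)).
exact: lexx.
Qed.

Lemma PrK_N_ge M : 1 - expected_missing M <= PrK p M N.
Proof.
have := sum_prod_law M.
rewrite (bigID (fun x : {ffun 'I_M -> 'I_N} => #|[set x j | j : 'I_M]| == N)) /=.
by have := sum_notsurj_le M; rewrite /PrK; lra.
Qed.

Lemma PrK_le1 M K : PrK p M K <= 1.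
Proof. by apply: sum_pred_le1 => [x|]; [exact: prodr_ge0 | exact: sum_prod_law]. Qed.

Lemma qMi_itv M i : 0 <= qMi p M i <= 1.
Proof.
by have /andP[r0 r1] := PrS_setC1X_itv i M; rewrite /qMi subr_ge0 r1 gerBl r0.
Qed.

Lemma poisson_binomial_weight_ge0 M (s : {set 'I_N}) :
  0 <= (\prod_(i in s) qMi p M i) * (\prod_(j in ~: s) (1 - qMi p M j)).
Proof.
apply: mulr_ge0; apply: prodr_ge0 => i _; have /andP[q0 q1] := qMi_itv M i.
  exact: q0.
by rewrite subr_ge0.
Qed.

Lemma QK_le1 M K : QK p M K <= 1.
Proof.
apply: sum_pred_le1 => [s|]; first exact: poisson_binomial_weight_ge0.
exact: sum_poisson_binomial.
Qed.

Lemma QK_ge0 M K : 0 <= QK p M K.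
Proof. by apply: sumr_ge0 => s _; exact: poisson_binomial_weight_ge0. Qed.

Lemma QK_le_1subr M K : K != N -> QK p M K <= 1 - QK p M N.
Proof.
move=> KN; apply: sum_disjoint_le_1subr => [s | | s /eqP ->] //.
- exact: poisson_binomial_weight_ge0.
- exact: sum_poisson_binomial.
Qed.

Lemma QK_N M : QK p M N = \prod_i qMi p M i.
Proof.
rewrite /QK (big_pred1 [set: 'I_N]%SET); last first.
  by move=> s; rewrite /= -cards_eqT card_ord.
by rewrite finset.setCT big_set0 mulr1; apply: eq_bigl => i; rewrite inE.
Qed.

Lemma QK_N_ge M : 1 - expected_missing M <= QK p M N.
Proof.
rewrite QK_N; apply: Weierstrass_product_inequality => i.
exact: PrS_setC1X_itv.
Qed.

Lemma dist_PrK_QK M K : `|PrK p M K - QK p M K| <= expected_missing M.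
Proof.
have := PrK_N_ge M; have := QK_N_ge M; have := PrK_le1 M N; have := QK_le1 M N.
have := PrK_ge0 M K; have := QK_ge0 M K; rewrite ler_norml.
have [-> | KN] := eqVneq K N; first by move=> *; apply/andP; split; lra.
have := PrK_le_1subr M KN; have := QK_le_1subr M KN.
by move=> *; apply/andP; split; lra.
Qed.

End MissingValues.

Theorem theorem1 (R : realType) (N : nat) (p : 'I_N -> R)
  (hN : (1 <= N)%N) (hpos : forall i, 0 < p i) (hsum : \sum_(i < N) p i = 1) :
  (fun M : nat => maxdiff p M) @ \oo --> (0 : R^o).
Proof.
have maxdiff_itv M : 0 <= maxdiff p M <= expected_missing p M.
  rewrite /maxdiff bigmax_ge_id /=; apply: bigmax_le => [|K _].
    exact: expected_missing_ge0.
  exact: dist_PrK_QK.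
apply: (@squeeze_cvgr _ _ _ _ (fun=> 0) (expected_missing p)).
- by apply: nearW => M; exact: maxdiff_itv.
- exact: (@cvg_cst R^o).
- exact: expected_missing_cvg0.
Qed.
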